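(* Let $p>1$, $\beta=1/(p-1)$, $\gamma=\frac{p-2}{2(p-1)}$, and let $\phi$ be a solution of $$\phi''=\tfrac12 y\phi'-\gamma\phi-|\phi'|^p\ (y>0),\qquad \phi(0)=0,\quad \phi'(0)=\alpha>0,$$ which exists globally on $[0,\infty)$, satisfies $\phi>0$, $\phi'>0$ on $(0,\infty)$, and for which there is $\bar R>0$ with $\phi''<0$ on $[0,\bar R)$ and $\phi''>0$ on $(\bar R,\infty)$. Then $$\lim_{y\to\infty}\frac{\phi(y)}{y^{\beta+1}}=L:=\frac{p^{-\beta}}{\beta+1}.$$ *)

From Stdlib Require Import Reals Lra.
From Coquelicot Require Import Coquelicot.
Open Scope R_scope.

(* Real power x^a for x >= 0 (with 0^a := 0, appropriate for a > 0). *)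
Definition rpow (x a : R) : R := if Rle_dec x 0 then 0 else Rpower x a.

Definition deriv_on_nonneg (f f' : R -> R) : Prop :=
  (forall y, 0 < y -> is_derive f y (f' y)) /\
  filterlim (fun h => (f h - f 0) / h) (at_right 0) (locally (f' 0)).

(* Write T = y phi''/phi', S = (beta + 1) phi / (y phi') and kappa(S) = (p - 1) - (p - 2) S.
   The equation becomes  y T' = T + (p - 1) T^2 + y^2/2 (beta - kappa(S) T)  and
   y S' = beta + 1 - S (1 + T).  Beyond Rbar phi' increases, which bounds S and keeps kappa(S)
   away from 0.  Since phi'^(p-1) grows at most linearly, ln phi' cannot grow quadratically,
   so T < tau0 y^2 eventually; a barrier argument then bounds T.  The factor y^2 in the
   equation for H = kappa(S) T - beta pushes H to 0, after which S is pushed to 1.  Finally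
   phi'^(p-1) / y = 1/2 - gamma S / (beta + 1) - T / y^2 tends to 1/p, and
   phi / y^(beta+1) = S / (beta + 1) * (phi'^(p-1) / y)^beta. *)

From Stdlib Require Import Reals Lra Classical.
From Coquelicot Require Import Coquelicot.
Open Scope R_scope.

Lemma le_of_derive_nonpos (f f' : R -> R) (a b : R) : a <= b ->
  (forall x, a <= x <= b -> is_derive f x (f' x)) ->
  (forall x, a <= x <= b -> f' x <= 0) -> f b <= f a.
Proof.
  intros Hab Hd Hneg.
  destruct (MVT_gen f a b f') as [c [Hc Hmvt]];
    rewrite ?Rmin_left, ?Rmax_right in * by lra.
  - intros x Hx; apply Hd; lra.
  - intros x Hx; apply continuity_pt_filterlim, (ex_derive_continuous f).
    exists (f' x); apply Hd; lra.
  - assert (f' c * (b - a) <= 0) by (apply Rmult_le_0_r; [apply Hneg|]; lra).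
    lra.
Qed.

Lemma continuous_near_open (f : R -> R) (x : R) (P : R -> Prop) :
  continuous f x -> open P -> P (f x) ->
  exists d, 0 < d /\ forall t, Rabs (t - x) < d -> P (f t).
Proof.
  intros Hf HP Hfx.
  destruct (Hf P (HP (f x) Hfx)) as [d Hd].
  exists d; split; [apply cond_pos|]. intros t Ht; apply Hd, Ht.
Qed.

Lemma derive_neg_lt_left (f : R -> R) (x l : R) : is_derive f x l -> l < 0 ->
  exists d, 0 < d /\ forall h, 0 < h < d -> f x < f (x - h).
Proof.
  intros Hd Hl. apply is_derive_Reals in Hd.
  destruct (Hd (- l) ltac:(lra)) as [d Hd'].
  exists d; split; [apply cond_pos|]. intros h Hh.
  specialize (Hd' (- h) ltac:(lra) ltac:(rewrite Rabs_Ropp, Rabs_pos_eq; lra)).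
  apply Rabs_lt_between in Hd'.
  replace (x + - h) with (x - h) in Hd' by ring.
  assert (Hq : (f (x - h) - f x) / - h < 0) by lra.
  apply Ropp_lt_cancel; apply Rmult_lt_reg_r with (/ h); [apply Rinv_0_lt_compat; lra|].
  unfold Rdiv in Hq; rewrite Rinv_opp in Hq. lra.
Qed.

Lemma ge_level_near_left (f : R -> R) (m l c : R) : is_derive f m l -> c <= f m ->
  (f m = c -> l < 0) -> exists d, 0 < d /\ forall h, 0 < h < d -> c <= f (m - h).
Proof.
  intros Hd Hge Hlevel.
  destruct (Req_dec (f m) c) as [Heq | Hne].
  - destruct (derive_neg_lt_left f m l Hd (Hlevel Heq)) as [d [Hd0 Hgt]].
    exists d; split; [lra|]; intros h Hh; pose proof (Hgt h Hh); lra.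
  - assert (Hcont : continuous f m) by (apply (ex_derive_continuous f); exists l; exact Hd).
    destruct (continuous_near_open f m _ Hcont (open_gt c) ltac:(lra)) as [d [Hd0 Hgt]].
    exists d; split; [lra|]; intros h Hh; left; apply Hgt.
    rewrite Rabs_left1; lra.
Qed.

Lemma lt_of_derive_neg_at_level (f f' : R -> R) (a c : R) :
  (forall x, a <= x -> is_derive f x (f' x)) ->
  (forall x, a <= x -> f x = c -> f' x < 0) ->
  f a < c -> forall x, a <= x -> f x < c.
Proof.
  intros Hd Hlevel Ha b Hab. apply Rnot_le_lt; intros Hb.
  set (E := fun x => a <= x <= b /\ forall t, a <= t <= x -> f t < c).
  assert (HEa : E a) by (split; [lra|]; intros t Ht; replace t with a by lra; exact Ha).
  destruct (completeness E) as [m [Hub Hlub]].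
  { exists b; intros x [Hx _]; lra. }
  { exists a; exact HEa. }
  assert (Ham : a <= m) by (apply Hub, HEa).
  assert (Hmb : m <= b) by (apply Hlub; intros x [Hx _]; lra).
  assert (Hbelow : forall t, a <= t < m -> f t < c).
  { intros t Ht; apply Rnot_le_lt; intros Hft.
    assert (Hm : m <= t); [|lra].
    apply Hlub; intros x [Hx Hx']; apply Rnot_lt_le; intros Htx.
    specialize (Hx' t ltac:(lra)); lra. }
  destruct (Rlt_le_dec (f m) c) as [Hlt | Hge].
  - assert (Hcont : continuous f m).
    { apply (ex_derive_continuous f); exists (f' m); apply Hd, Ham. }
    destruct (continuous_near_open f m _ Hcont (open_lt c) Hlt) as [d [Hd0 Hnear]].
    destruct (Req_dec m b) as [-> | Hmb']; [lra|].
    set (m' := Rmin (m + d / 2) b).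
    assert (Hm' : m < m' <= b) by (split; [apply Rmin_glb_lt | apply Rmin_r]; lra).
    assert (Hm'd : m' <= m + d / 2) by apply Rmin_l.
    assert (HE' : E m').
    { split; [split; lra|]. intros t Ht; destruct (Rlt_le_dec t m); [apply Hbelow; lra|].
      apply Hnear; rewrite Rabs_pos_eq; lra. }
    pose proof (Hub m' HE'); lra.
  - assert (Ham' : a < m) by (destruct (Req_dec a m) as [<- |]; lra).
    destruct (ge_level_near_left f m (f' m) c (Hd m Ham) Hge (Hlevel m Ham))
      as [d [Hd0 Habove]].
    set (h := Rmin (d / 2) (m - a)).
    assert (Hh : 0 < h <= m - a) by (split; [apply Rmin_glb_lt | apply Rmin_r]; lra).
    assert (Hhd : h <= d / 2) by apply Rmin_l.
    pose proof (Habove h ltac:(lra)); pose proof (Hbelow (m - h) ltac:(lra)); lra.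
Qed.

Lemma eventually_lt_of_derive_le (f f' : R -> R) (a c delta : R) :
  0 < a -> 0 < delta ->
  (forall x, a <= x -> is_derive f x (f' x)) ->
  (forall x, a <= x -> c <= f x -> f' x <= - delta / x) ->
  Rbar_locally p_infty (fun x => f x < c).
Proof.
  intros Ha Hdelta Hd Hdrift.
  destruct (classic (exists b, a <= b /\ f b < c)) as [[b [Hab Hb]] | Hnever].
  - exists b; intros x Hx.
    apply (lt_of_derive_neg_at_level f f' b); [intros; apply Hd; lra | | exact Hb | lra].
    intros t Ht Hft; pose proof (Hdrift t ltac:(lra) ltac:(lra)).
    assert (0 < delta / t) by (apply Rdiv_lt_0_compat; lra); lra.
  - (* f >= c forever would make f + delta ln decrease, forcing f below c *)
    exfalso.
    assert (Habove : forall x, a <= x -> c <= f x).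
    { intros x Hx; apply Rnot_lt_le; intros Hfx; apply Hnever; exists x; split; assumption. }
    set (x := exp ((f a - c) / delta + ln a + 1)).
    assert (Hlnx : ln x = (f a - c) / delta + ln a + 1) by apply ln_exp.
    assert (Hxa : a <= x).
    { pose proof (Habove a ltac:(lra)).
      assert (0 <= (f a - c) / delta) by (apply Rdiv_le_0_compat; lra).
      left; apply ln_lt_inv; [lra | apply exp_pos | lra]. }
    assert (Hdecr : f x + delta * ln x <= f a + delta * ln a).
    { apply (le_of_derive_nonpos (fun t => f t + delta * ln t) (fun t => f' t + delta * / t));
        [exact Hxa | |].
      - intros t Ht; apply (is_derive_plus f (fun t => delta * ln t)); [apply Hd; lra|].
        apply is_derive_scal, is_derive_ln; lra.
      - intros t Ht; pose proof (Hdrift t ltac:(lra) (Habove t ltac:(lra))).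
        unfold Rdiv in *; lra. }
    rewrite Hlnx in Hdecr.
    replace (delta * ((f a - c) / delta + ln a + 1)) with (f a - c + delta * ln a + delta)
      in Hdecr by (field; lra).
    pose proof (Habove x Hxa); lra.
Qed.

Lemma is_lim_of_derive_restoring (f f' : R -> R) (l : R) :
  (forall x, 0 < x -> is_derive f x (f' x)) ->
  (forall eps, 0 < eps -> exists a delta, 0 < a /\ 0 < delta /\ forall x, a <= x ->
     (l + eps <= f x -> f' x <= - delta / x) /\ (f x <= l - eps -> delta / x <= f' x)) ->
  is_lim f p_infty l.
Proof.
  intros Hd Hrestore. apply is_lim_spec; intros [eps Heps].
  change (Rbar_locally p_infty (fun x => Rabs (f x - l) < eps)).
  destruct (Hrestore eps Heps) as (a & delta & Ha & Hdelta & Hdrift).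
  assert (Habove : Rbar_locally p_infty (fun x => f x - l < eps)).
  { apply (eventually_lt_of_derive_le _ f' a eps delta Ha Hdelta).
    - intros x Hx; replace (f' x) with (f' x - 0) by ring.
      apply (is_derive_minus f (fun _ => l)); [apply Hd; lra | exact (is_derive_const l x)].
    - intros x Hx Hfx; apply (Hdrift x Hx); lra. }
  assert (Hbelow : Rbar_locally p_infty (fun x => l - f x < eps)).
  { apply (eventually_lt_of_derive_le _ (fun x => - f' x) a eps delta Ha Hdelta).
    - intros x Hx; replace (- f' x) with (0 - f' x) by ring.
      apply (is_derive_minus (fun _ => l) f); [exact (is_derive_const l x) | apply Hd; lra].
    - intros x Hx Hfx; pose proof (proj2 (Hdrift x Hx) ltac:(lra)); unfold Rdiv in *; lra. }
  generalize (filter_and _ _ Habove Hbelow); apply filter_imp.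
  intros x [H1 H2]; apply Rabs_lt_between'; lra.
Qed.

Lemma eventually_threshold (P : R -> Prop) (b : R) :
  Rbar_locally p_infty P -> exists a, b <= a /\ forall x, a <= x -> P x.
Proof.
  intros [M HM]; exists (Rmax b M + 1); split; [pose proof (Rmax_l b M); lra|].
  intros x Hx; apply HM; pose proof (Rmax_r b M); lra.
Qed.

Lemma eventually_gt (b : R) : Rbar_locally p_infty (fun x => b < x).
Proof. exists b; auto. Qed.

Lemma eventually_linear_lt_quadratic (a b c : R) : 0 < a ->
  Rbar_locally p_infty (fun x => b * x + c < a * (x * x)).
Proof.
  intros Ha; exists (Rmax 1 ((Rabs b + Rabs c) / a)); intros x Hx.
  pose proof (Rmax_l 1 ((Rabs b + Rabs c) / a)); pose proof (Rmax_r 1 ((Rabs b + Rabs c) / a)).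
  assert (Hax : Rabs b + Rabs c < a * x).
  { apply Rmult_lt_reg_r with (/ a); [apply Rinv_0_lt_compat, Ha|].
    replace (a * x * / a) with x by (field; lra); unfold Rdiv in *; lra. }
  pose proof (Rle_abs b); pose proof (Rle_abs c); pose proof (Rabs_pos c).
  assert (b * x <= Rabs b * x) by (apply Rmult_le_compat_r; lra).
  assert (Rabs c <= Rabs c * x) by (rewrite <- (Rmult_1_r (Rabs c)) at 1; apply Rmult_le_compat_l; lra).
  assert ((Rabs b + Rabs c) * x < a * x * x) by (apply Rmult_lt_compat_r; lra).
  nra.
Qed.

Lemma Rpower_pred (x a : R) : 0 < x -> Rpower x a = x * Rpower x (a - 1).
Proof.
  intros Hx; rewrite <- (Rpower_1 x) at 2 by exact Hx; rewrite <- Rpower_plus; f_equal; ring.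
Qed.

Definition beta (p : R) : R := / (p - 1).
Definition gamma (p : R) : R := (p - 2) / (2 * (p - 1)).
Definition kappa (p s : R) : R := (p - 1) - (p - 2) * s.
Definition S_max (p : R) : R := beta p + 1 + beta p / (2 * p).
Definition kappa_min (p : R) : R := Rmin (p - 1) (beta p / 2).

Lemma beta_pos (p : R) : 1 < p -> 0 < beta p.
Proof. intros Hp; apply Rinv_0_lt_compat; lra. Qed.

Lemma kappa_min_pos (p : R) : 1 < p -> 0 < kappa_min p.
Proof. intros Hp; pose proof (beta_pos p Hp); apply Rmin_glb_lt; lra. Qed.

Lemma kappa_min_le (p s : R) : 1 < p -> 0 <= s <= S_max p -> kappa_min p <= kappa p s.
Proof.
  intros Hp Hs; pose proof (beta_pos p Hp) as Hb; unfold kappa, kappa_min.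
  destruct (Rle_or_lt 2 p) as [H2 | H2].
  - (* kappa p (beta p + 1) = beta p, and the slack beta p / (2 p) costs at most beta p / 2 *)
    assert (Hslack : (p - 2) * (beta p / (2 * p)) <= beta p / 2).
    { replace ((p - 2) * (beta p / (2 * p))) with (beta p / 2 * ((p - 2) / p)) by (field; lra).
      rewrite <- (Rmult_1_r (beta p / 2)) at 2; apply Rmult_le_compat_l; [lra|].
      apply (Rdiv_le_1 (p - 2) p); lra. }
    assert (Hkb : (p - 1) - (p - 2) * (beta p + 1) = beta p) by (unfold beta; field; lra).
    assert ((p - 2) * s <= (p - 2) * S_max p) by (apply Rmult_le_compat_l; lra).
    unfold S_max in *; pose proof (Rmin_r (p - 1) (beta p / 2)); nra.
  - pose proof (Rmin_l (p - 1) (beta p / 2)).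
    assert (0 <= (2 - p) * s) by (apply Rmult_le_pos; lra); lra.
Qed.

Lemma eventually_near_lim (f : R -> R) (l eps : R) : is_lim f p_infty l -> 0 < eps ->
  Rbar_locally p_infty (fun x => Rabs (f x - l) < eps).
Proof. intros Hf Heps; exact (proj2 (is_lim_spec f p_infty l) Hf (mkposreal eps Heps)). Qed.

Definition tau0 (p : R) : R := kappa_min p / (4 * (p - 1)).
Definition T_max (p : R) : R := 4 * beta p / kappa_min p.
Definition Hq_source (p s t : R) : R :=
  kappa p s * (t + (p - 1) * t ^ 2) - (p - 2) * t * (beta p + 1 - s * (1 + t)).

Lemma tau0_pos (p : R) : 1 < p -> 0 < tau0 p.
Proof. intros Hp; apply Rdiv_lt_0_compat; [apply kappa_min_pos, Hp | lra]. Qed.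

Lemma T_max_pos (p : R) : 1 < p -> 0 < T_max p.
Proof.
  intros Hp; apply Rdiv_lt_0_compat; [pose proof (beta_pos p Hp); lra | apply kappa_min_pos, Hp].
Qed.

(* [X] stands for [y ^ 2]: this is [y * (Tq' y - 2 tau0 y)] at a point where [Tq y = tau0 y ^ 2]. *)
Lemma band_drift_neg (p k X : R) : 1 < p -> kappa_min p <= k ->
  4 * (tau0 p + beta p / 2) <= tau0 p * kappa_min p * X ->
  tau0 p * X + (p - 1) * (tau0 p * X) ^ 2 + X / 2 * (beta p - tau0 p * X * k)
    - 2 * tau0 p * X < 0.
Proof.
  intros Hp Hk HX.
  pose proof (tau0_pos p Hp) as Ht; pose proof (kappa_min_pos p Hp) as Hc.
  pose proof (beta_pos p Hp) as Hb.
  assert (Hpt : (p - 1) * tau0 p = kappa_min p / 4) by (unfold tau0; field; lra).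
  assert (HX0 : 0 < X).
  { assert (Htc : 0 < tau0 p * kappa_min p) by (apply Rmult_lt_0_compat; lra).
    set (tc := tau0 p * kappa_min p) in *; nra. }
  assert (tau0 p * X * kappa_min p <= tau0 p * X * k) by (apply Rmult_le_compat_l; nra).
  replace ((p - 1) * (tau0 p * X) ^ 2) with ((p - 1) * tau0 p * (tau0 p * X * X)) by ring.
  rewrite Hpt; nra.
Qed.

Lemma bounded_drift_le (p k t X : R) : 1 < p -> kappa_min p <= k -> 0 < t ->
  t < tau0 p * X -> T_max p <= t -> 16 <= kappa_min p * X ->
  t + (p - 1) * t ^ 2 + X / 2 * (beta p - t * k) <= - t.
Proof.
  intros Hp Hk Ht HtX HT HX.
  pose proof (kappa_min_pos p Hp) as Hc; pose proof (beta_pos p Hp) as Hb.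
  assert (Hpt : (p - 1) * tau0 p = kappa_min p / 4) by (unfold tau0; field; lra).
  assert (HcT : 4 * beta p <= kappa_min p * t).
  { unfold T_max in HT; apply Rle_div_l in HT; [lra | exact Hc]. }
  assert (HX0 : 0 < X) by nra.
  assert ((p - 1) * t ^ 2 <= kappa_min p / 4 * X * t).
  { rewrite <- Hpt; replace ((p - 1) * t ^ 2) with ((p - 1) * t * t) by ring.
    apply Rmult_le_compat_r; [lra|]. rewrite Rmult_assoc; apply Rmult_le_compat_l; lra. }
  assert (t * kappa_min p <= t * k) by (apply Rmult_le_compat_l; lra).
  nra.
Qed.

Lemma Rabs_minus_le_plus (a b : R) : Rabs (a - b) <= Rabs a + Rabs b.
Proof. unfold Rminus; rewrite <- (Rabs_Ropp b); apply Rabs_triang. Qed.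

Lemma Hq_source_bounded (p sm tm : R) : exists B, forall s t,
  0 <= s <= sm -> 0 <= t <= tm -> Rabs (Hq_source p s t) <= B.
Proof.
  set (K := Rabs (p - 1) + Rabs (p - 2) * sm).
  set (A := tm + Rabs (p - 1) * tm ^ 2).
  set (W := Rabs (beta p + 1) + sm * (1 + tm)).
  exists (K * A + Rabs (p - 2) * tm * W); intros s t Hs Ht.
  pose proof (Rabs_pos (p - 1)); pose proof (Rabs_pos (p - 2)).
  assert (HK : Rabs (kappa p s) <= K).
  { unfold kappa, K; eapply Rle_trans; [apply Rabs_minus_le_plus|].
    rewrite Rabs_mult, (Rabs_pos_eq s) by lra.
    apply Rplus_le_compat_l, Rmult_le_compat_l; lra. }
  assert (HA : Rabs (t + (p - 1) * t ^ 2) <= A).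
  { unfold A; eapply Rle_trans; [apply Rabs_triang|].
    rewrite Rabs_mult, (Rabs_pos_eq t), (Rabs_pos_eq (t ^ 2)) by (try apply pow2_ge_0; lra).
    apply Rplus_le_compat; [lra|]. apply Rmult_le_compat_l; [lra|].
    apply pow_incr; lra. }
  assert (HW : Rabs (beta p + 1 - s * (1 + t)) <= W).
  { unfold W; eapply Rle_trans; [apply Rabs_minus_le_plus|].
    rewrite (Rabs_pos_eq (s * (1 + t))) by (apply Rmult_le_pos; lra).
    apply Rplus_le_compat_l, Rmult_le_compat; lra. }
  unfold Hq_source; eapply Rle_trans; [apply Rabs_minus_le_plus|].
  rewrite !Rabs_mult, (Rabs_pos_eq t) by lra.
  apply Rplus_le_compat.
  - apply Rmult_le_compat; [apply Rabs_pos | apply Rabs_pos | exact HK | exact HA].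
  - apply Rmult_le_compat; [apply Rmult_le_pos; lra | apply Rabs_pos | | exact HW].
    apply Rmult_le_compat_l; lra.
Qed.

Lemma Sq'_numerator_eq (p s t : R) : 1 < p -> kappa p s <> 0 ->
  beta p + 1 - s * (1 + t) = (1 - s) * (1 + / kappa p s) - s * (t * kappa p s - beta p) / kappa p s.
Proof. intros Hp Hk; unfold kappa, beta in *; field; split; lra. Qed.

Section Profile.

Variables (p Rb : R) (phi u v : R -> R).
Hypothesis p_gt_1 : 1 < p.
Hypothesis Rb_pos : 0 < Rb.
Hypothesis phi_derive : forall y, 0 < y -> is_derive phi y (u y).
Hypothesis u_derive : forall y, 0 < y -> is_derive u y (v y).
Hypothesis profile_ode :
  forall y, 0 < y -> v y = / 2 * y * u y - gamma p * phi y - Rpower (u y) p.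
Hypothesis phi_pos : forall y, 0 < y -> 0 < phi y.
Hypothesis u_pos : forall y, 0 < y -> 0 < u y.
Hypothesis v_pos : forall y, Rb < y -> 0 < v y.

Definition Tq (y : R) : R := y * v y / u y.
Definition Sq (y : R) : R := (beta p + 1) * phi y / (y * u y).
Definition Hq (y : R) : R := Tq y * kappa p (Sq y) - beta p.

Definition Tq' (y : R) : R :=
  (Tq y + (p - 1) * Tq y ^ 2 + y ^ 2 / 2 * (beta p - Tq y * kappa p (Sq y))) / y.
Definition Sq' (y : R) : R := (beta p + 1 - Sq y * (1 + Tq y)) / y.
Definition Hq' (y : R) : R :=
  (Hq_source p (Sq y) (Tq y) - kappa p (Sq y) * y ^ 2 / 2 * Hq y) / y.

Lemma v_derive (y : R) : 0 < y ->
  is_derive v y (u y / 2 + y * v y / 2 - gamma p * u y - p * v y / u y * Rpower (u y) p).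
Proof.
  intros Hy; pose proof (u_pos y Hy) as Huy.
  apply (is_derive_ext_loc (fun t => / 2 * t * u t - gamma p * phi t - exp (p * ln (u t)))).
  { exists (mkposreal y Hy); intros t Ht.
    apply Rabs_lt_between' in Ht; simpl in Ht.
    rewrite profile_ode by lra; reflexivity. }
  auto_derive.
  - assert (ex_derive u y) by (eexists; apply u_derive, Hy).
    assert (ex_derive phi y) by (eexists; apply phi_derive, Hy).
    repeat split; assumption.
  - replace (Derive (fun t => u t) y) with (v y) by (symmetry; apply is_derive_unique, u_derive, Hy).
    replace (Derive (fun t => phi t) y) with (u y) by (symmetry; apply is_derive_unique, phi_derive, Hy).
    unfold Rpower; field; lra.
Qed.

Lemma Tq_derive (y : R) : 0 < y -> is_derive Tq y (Tq' y).
Proof.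
  intros Hy; pose proof (u_pos y Hy) as Huy.
  assert (Hpow : Rpower (u y) p = / 2 * y * u y - gamma p * phi y - v y)
    by (rewrite (profile_ode y Hy); ring).
  unfold Tq; auto_derive.
  - assert (ex_derive u y) by (eexists; apply u_derive, Hy).
    assert (ex_derive v y) by (eexists; apply (v_derive y Hy)).
    repeat split; try assumption; lra.
  - replace (Derive (fun t => u t) y) with (v y) by (symmetry; apply is_derive_unique, u_derive, Hy).
    erewrite (is_derive_unique (fun t => v t)) by (apply (v_derive y Hy)).
    rewrite Hpow; unfold Tq', Tq, Sq, kappa, beta, gamma; field; repeat split; lra.
Qed.

Lemma Sq_derive (y : R) : 0 < y -> is_derive Sq y (Sq' y).
Proof.
  intros Hy; pose proof (u_pos y Hy) as Huy.
  unfold Sq; auto_derive.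
  - assert (ex_derive u y) by (eexists; apply u_derive, Hy).
    assert (ex_derive phi y) by (eexists; apply phi_derive, Hy).
    assert (y * u y <> 0) by (apply Rgt_not_eq, Rmult_lt_0_compat; lra).
    repeat split; assumption.
  - replace (Derive (fun t => u t) y) with (v y) by (symmetry; apply is_derive_unique, u_derive, Hy).
    replace (Derive (fun t => phi t) y) with (u y) by (symmetry; apply is_derive_unique, phi_derive, Hy).
    unfold Sq', Sq, Tq; field; repeat split; lra.
Qed.

Lemma Hq_derive (y : R) : 0 < y -> is_derive Hq y (Hq' y).
Proof.
  intros Hy.
  apply (is_derive_ext (fun t => Tq t * ((p - 1) - (p - 2) * Sq t) - beta p)); [reflexivity|].
  auto_derive.
  - repeat split; eexists; [apply Tq_derive | apply Sq_derive]; exact Hy.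
  - replace (Derive (fun t => Tq t) y) with (Tq' y) by (symmetry; apply is_derive_unique, Tq_derive, Hy).
    replace (Derive (fun t => Sq t) y) with (Sq' y) by (symmetry; apply is_derive_unique, Sq_derive, Hy).
    unfold Hq', Hq, Hq_source, Tq', Sq', kappa; field; lra.
Qed.

Lemma u_nondecreasing (a b : R) : Rb < a -> a <= b -> u a <= u b.
Proof.
  intros Ha Hab; apply Ropp_le_cancel.
  apply (le_of_derive_nonpos (fun t => - u t) (fun t => - v t)); [exact Hab | |].
  - intros x Hx; exact (is_derive_opp u x (v x) (u_derive x ltac:(lra))).
  - intros x Hx; pose proof (v_pos x ltac:(lra)); lra.
Qed.

Lemma phi_le_add (a y : R) : Rb < a -> a <= y -> phi y <= phi a + y * u y.
Proof.
  intros Ha Hay.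
  assert (phi y - y * u y <= phi a - a * u y).
  { apply (le_of_derive_nonpos (fun t => phi t - t * u y) (fun t => u t - u y)); [exact Hay | |].
    - intros x Hx; auto_derive; [eexists; apply phi_derive; lra|].
      replace (Derive (fun t => phi t) x) with (u x)
        by (symmetry; apply is_derive_unique, phi_derive; lra); ring.
    - intros x Hx; pose proof (u_nondecreasing x y ltac:(lra) ltac:(lra)); lra. }
  pose proof (u_pos y ltac:(lra)); assert (0 <= a * u y) by (apply Rmult_le_pos; lra); lra.
Qed.

Lemma Sq_pos (y : R) : 0 < y -> 0 < Sq y.
Proof.
  intros Hy; pose proof (beta_pos p p_gt_1); pose proof (phi_pos y Hy); pose proof (u_pos y Hy).
  apply Rdiv_lt_0_compat; apply Rmult_lt_0_compat; lra.
Qed.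

Lemma Sq_bounds_eventually :
  Rbar_locally p_infty (fun y => 0 < Sq y <= S_max p /\ kappa_min p <= kappa p (Sq y)).
Proof.
  set (y0 := Rb + 1); assert (Hy0 : Rb < y0) by (unfold y0; lra).
  set (delta := beta p / (2 * p)).
  pose proof (beta_pos p p_gt_1) as Hb.
  assert (Hdelta : 0 < delta) by (apply Rdiv_lt_0_compat; lra).
  pose proof (phi_pos y0 ltac:(lra)); pose proof (u_pos y0 ltac:(lra)).
  generalize (filter_and _ _ (eventually_gt y0)
    (eventually_gt ((beta p + 1) * phi y0 / (delta * u y0)))).
  apply filter_imp; intros y [Hy0y Hy].
  pose proof (Sq_pos y ltac:(lra)).
  assert (HSle : Sq y <= S_max p).
  { pose proof (u_pos y ltac:(lra)) as Huy.
    pose proof (phi_le_add y0 y Hy0 ltac:(lra)).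
    pose proof (u_nondecreasing y0 y Hy0 ltac:(lra)).
    apply Rlt_div_l in Hy; [|apply Rmult_lt_0_compat; lra].
    unfold Sq, S_max; fold delta; apply Rle_div_l; [apply Rmult_lt_0_compat; lra|].
    assert (delta * u y0 * y <= delta * (y * u y)).
    { rewrite Rmult_assoc; apply Rmult_le_compat_l; [lra|]. rewrite Rmult_comm.
      apply Rmult_le_compat_l; lra. }
    nra. }
  split; [lra | apply kappa_min_le; lra].
Qed.

Lemma u_pow_lt_linear :
  exists A, 0 < A /\ forall y, Rb + 1 <= y -> Rpower (u y) (p - 1) < A * y.
Proof.
  set (y0 := Rb + 1); assert (Hy0 : Rb < y0 /\ 1 < y0) by (unfold y0; lra).
  pose proof (phi_pos y0 ltac:(lra)); pose proof (u_pos y0 ltac:(lra)).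
  assert (Hratio : 0 <= phi y0 / u y0) by (apply Rlt_le, Rdiv_lt_0_compat; lra).
  pose proof (Rabs_pos (gamma p)).
  exists (/ 2 + Rabs (gamma p) * (1 + phi y0 / u y0)); split.
  { assert (0 <= Rabs (gamma p) * (1 + phi y0 / u y0)) by (apply Rmult_le_pos; lra); lra. }
  intros y Hy; fold y0 in Hy.
  pose proof (u_pos y ltac:(lra)) as Huy; pose proof (phi_pos y ltac:(lra)).
  pose proof (phi_le_add y0 y ltac:(lra) Hy).
  pose proof (u_nondecreasing y0 y ltac:(lra) Hy).
  assert (Hgamma : - gamma p * phi y <= Rabs (gamma p) * phi y).
  { apply Rmult_le_compat_r; [lra|]. rewrite <- Rabs_Ropp; apply Rle_abs. }
  assert (Hphi0 : phi y0 <= y * u y * (phi y0 / u y0)).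
  { replace (y * u y * (phi y0 / u y0)) with (phi y0 * (y * u y / u y0)) by (field; lra).
    rewrite <- (Rmult_1_r (phi y0)) at 1; apply Rmult_le_compat_l; [lra|].
    apply Rle_div_r; nra. }
  assert (Rabs (gamma p) * phi y <= Rabs (gamma p) * (y * u y * (1 + phi y0 / u y0)))
    by (apply Rmult_le_compat_l; lra).
  pose proof (v_pos y ltac:(lra)) as Hv.
  rewrite profile_ode, (Rpower_pred (u y) p Huy) in Hv by lra.
  apply Rmult_lt_reg_l with (u y); [exact Huy | nra].
Qed.

Lemma ln_u_le_linear :
  exists K, Rbar_locally p_infty (fun y => (p - 1) * ln (u y) <= K + y).
Proof.
  destruct u_pow_lt_linear as [A [HA Hlin]].
  exists (ln A); exists (Rb + 1); intros y Hy.
  pose proof (u_pos y ltac:(lra)) as Huy.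
  specialize (Hlin y ltac:(lra)).
  apply ln_increasing in Hlin; [|apply exp_pos].
  rewrite ln_Rpower, ln_mult in Hlin by lra.
  assert (ln y < y).
  { rewrite <- (ln_exp y) at 2; apply ln_increasing; [lra|].
    pose proof (exp_ineq1 y ltac:(lra)); lra. }
  lra.
Qed.

Lemma Tq_pos (y : R) : Rb < y -> 0 < Tq y.
Proof.
  intros Hy; pose proof (v_pos y Hy); pose proof (u_pos y ltac:(lra)).
  apply Rdiv_lt_0_compat; [apply Rmult_lt_0_compat|]; lra.
Qed.

Lemma not_Tq_ge_quadratic (a : R) : Rb < a ->
  ~ (forall x, a <= x -> tau0 p * (x * x) <= Tq x).
Proof.
  intros Ha Hge; pose proof (tau0_pos p p_gt_1) as Ht.
  (* (ln u)' = Tq / y >= tau0 y: ln u would grow quadratically *)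
  assert (Hgrow : forall x, a <= x -> ln (u a) + tau0 p / 2 * (x * x - a * a) <= ln (u x)).
  { intros x Hx.
    assert (tau0 p / 2 * (x * x) - ln (u x) <= tau0 p / 2 * (a * a) - ln (u a)); [|lra].
    apply (le_of_derive_nonpos (fun t => tau0 p / 2 * (t * t) - ln (u t))
      (fun t => tau0 p * t - v t / u t)); [exact Hx | |].
    - intros t Ht'; pose proof (u_pos t ltac:(lra)).
      auto_derive; [split; [eexists; apply u_derive; lra | split; [lra | exact I]]|].
      replace (Derive (fun t => u t) t) with (v t) by (symmetry; apply is_derive_unique, u_derive; lra).
      field; lra.
    - intros t Ht'; pose proof (u_pos t ltac:(lra)).
      assert (tau0 p * t <= v t / u t); [|lra].
      apply Rmult_le_reg_l with t; [lra|].
      replace (t * (v t / u t)) with (Tq t) by (unfold Tq; field; lra).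
      replace (t * (tau0 p * t)) with (tau0 p * (t * t)) by ring; apply Hge; lra. }
  destruct ln_u_le_linear as [K HK].
  assert (Hq : 0 < (p - 1) * (tau0 p / 2)) by (apply Rmult_lt_0_compat; lra).
  destruct (eventually_threshold _ a (filter_and _ _ HK (eventually_linear_lt_quadratic
    ((p - 1) * (tau0 p / 2)) 1 (K - (p - 1) * (ln (u a) - tau0 p / 2 * (a * a))) Hq)))
    as [x [Hax Hx]].
  destruct (Hx x (Rle_refl x)) as [Hlin Hquad].
  assert (Hpx := Rmult_le_compat_l (p - 1) _ _ ltac:(lra) (Hgrow x Hax)).
  lra.
Qed.

Lemma Tq_lt_quadratic_eventually : Rbar_locally p_infty (fun x => Tq x < tau0 p * (x * x)).
Proof.
  pose proof (tau0_pos p p_gt_1) as Ht; pose proof (kappa_min_pos p p_gt_1) as Hc.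
  destruct (eventually_threshold _ (Rb + 1) (filter_and _ _ Sq_bounds_eventually
    (eventually_linear_lt_quadratic (tau0 p * kappa_min p) 0 (4 * (tau0 p + beta p / 2))
       ltac:(apply Rmult_lt_0_compat; lra)))) as [a [Ha Hbounds]].
  destruct (classic (exists b, a <= b /\ Tq b < tau0 p * (b * b))) as [[b [Hab Hb]] | Hnone].
  - exists b; intros x Hx.
    assert (Tq x - tau0 p * (x * x) < 0); [|lra].
    apply (lt_of_derive_neg_at_level (fun t => Tq t - tau0 p * (t * t))
      (fun t => Tq' t - tau0 p * (2 * t)) b 0); [| | cbv beta; lra | lra].
    + intros t Ht'; apply (is_derive_minus Tq (fun t => tau0 p * (t * t))); [apply Tq_derive; lra|].
      auto_derive; [exact I | ring].
    + intros t Ht' Hlevel; destruct (Hbounds t ltac:(lra)) as [[HS Hk] HX].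
      pose proof (band_drift_neg p (kappa p (Sq t)) (t * t) p_gt_1 Hk ltac:(lra)) as Hneg.
      replace (Tq' t - tau0 p * (2 * t)) with
        ((tau0 p * (t * t) + (p - 1) * (tau0 p * (t * t)) ^ 2
          + t * t / 2 * (beta p - tau0 p * (t * t) * kappa p (Sq t)) - 2 * tau0 p * (t * t)) / t)
        by (unfold Tq'; replace (Tq t) with (tau0 p * (t * t)) by lra; field; lra).
      apply Rdiv_neg_pos; lra.
  - exfalso; apply (not_Tq_ge_quadratic a); [lra|].
    intros x Hx; apply Rnot_lt_le; intros Hlt; apply Hnone; exists x; split; assumption.
Qed.

Lemma Tq_lt_T_max_eventually : Rbar_locally p_infty (fun x => Tq x < T_max p).
Proof.
  pose proof (kappa_min_pos p p_gt_1) as Hc; pose proof (T_max_pos p p_gt_1) as HT.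
  destruct (eventually_threshold _ (Rb + 1)
    (filter_and _ _ (filter_and _ _ Sq_bounds_eventually Tq_lt_quadratic_eventually)
       (eventually_linear_lt_quadratic (kappa_min p) 0 16 Hc))) as [a [Ha Hx]].
  apply (eventually_lt_of_derive_le Tq Tq' a (T_max p) (T_max p)); [lra | lra | |].
  { intros x Hxa; apply Tq_derive; lra. }
  intros x Hxa HTx; destruct (Hx x Hxa) as [[[HS Hk] Hband] H16].
  pose proof (bounded_drift_le p (kappa p (Sq x)) (Tq x) (x * x) p_gt_1 Hk
    (Tq_pos x ltac:(lra)) Hband HTx ltac:(lra)).
  unfold Tq', Rdiv; replace (x ^ 2) with (x * x) by ring.
  apply Rmult_le_compat_r; [apply Rlt_le, Rinv_0_lt_compat|]; lra.
Qed.

Lemma Hq_lim : is_lim Hq p_infty 0.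
Proof.
  pose proof (kappa_min_pos p p_gt_1) as Hc.
  destruct (Hq_source_bounded p (S_max p) (T_max p)) as [B HB].
  apply (is_lim_of_derive_restoring Hq Hq' 0 Hq_derive); intros eps Heps.
  assert (Hce : 0 < kappa_min p * eps / 2) by (apply Rdiv_lt_0_compat; [apply Rmult_lt_0_compat|]; lra).
  destruct (eventually_threshold _ (Rb + 1)
    (filter_and _ _ (filter_and _ _ Sq_bounds_eventually Tq_lt_T_max_eventually)
       (eventually_linear_lt_quadratic (kappa_min p * eps / 2) 0 (B + 1) Hce)))
    as [a [Ha Hx]].
  exists a, 1; split; [lra | split; [lra|]]; intros x Hxa.
  destruct (Hx x Hxa) as [[[HS Hk] HT] Hlarge].
  pose proof (HB (Sq x) (Tq x) ltac:(lra) ltac:(pose proof (Tq_pos x ltac:(lra)); lra)) as HE.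
  apply Rabs_le_between in HE.
  assert (Hx2 : 0 < x * x) by nra.
  assert (Hxinv : 0 < / x) by (apply Rinv_0_lt_compat; lra).
  unfold Hq', Rdiv; replace (x ^ 2) with (x * x) by ring.
  split; intros HHq.
  - apply Rmult_le_compat_r; [lra|].
    assert (kappa_min p * (x * x) * eps <= kappa p (Sq x) * (x * x) * Hq x)
      by (apply Rmult_le_compat; try apply Rmult_le_compat_r; nra).
    lra.
  - apply Rmult_le_compat_r; [lra|].
    assert (kappa_min p * (x * x) * eps <= kappa p (Sq x) * (x * x) * - Hq x)
      by (apply Rmult_le_compat; try apply Rmult_le_compat_r; nra).
    lra.
Qed.

Lemma Sq_lim : is_lim Sq p_infty 1.
Proof.
  pose proof (kappa_min_pos p p_gt_1) as Hc; pose proof (beta_pos p p_gt_1) as Hb.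
  assert (HSm : 0 < S_max p) by (unfold S_max; pose proof (Rdiv_lt_0_compat (beta p) (2 * p)); lra).
  apply (is_lim_of_derive_restoring Sq Sq' 1 Sq_derive); intros eps Heps.
  set (eta := eps * kappa_min p / (2 * S_max p)).
  assert (Heta : 0 < eta) by (apply Rdiv_lt_0_compat; [apply Rmult_lt_0_compat|]; lra).
  destruct (eventually_threshold _ (Rb + 1)
    (filter_and _ _ Sq_bounds_eventually (eventually_near_lim Hq 0 eta Hq_lim Heta)))
    as [a [Ha Hx]].
  exists a, (eps / 2); split; [lra | split; [lra|]]; intros x Hxa.
  destruct (Hx x Hxa) as [[HS Hk] HH]; rewrite Rminus_0_r in HH.
  set (s := Sq x) in *; set (k := kappa p s) in *.
  assert (Hk0 : 0 < k) by lra.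
  assert (Hsmall : Rabs (s * Hq x / k) <= eps / 2).
  { unfold Rdiv; rewrite !Rabs_mult, Rabs_inv, (Rabs_pos_eq s), (Rabs_pos_eq k) by lra.
    apply Rle_trans with (S_max p * eta * / kappa_min p).
    - apply Rmult_le_compat; try apply Rmult_le_pos; try apply Rabs_pos; try lra.
      + apply Rlt_le, Rinv_0_lt_compat; lra.
      + apply Rmult_le_compat; try apply Rabs_pos; lra.
      + apply Rinv_le_contravar; lra.
    - unfold eta; right; field; split; lra. }
  apply Rabs_le_between in Hsmall.
  assert (Hnum : beta p + 1 - s * (1 + Tq x) = (1 - s) * (1 + / k) - s * Hq x / k)
    by (apply Sq'_numerator_eq; [lra | apply Rgt_not_eq, Hk0]).
  assert (Hxinv : 0 < / x) by (apply Rinv_0_lt_compat; lra).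
  assert (Hkinv : 0 < / k) by (apply Rinv_0_lt_compat; lra).
  unfold Sq', Rdiv; fold s; rewrite Hnum; split; intros HSx.
  - rewrite Ropp_mult_distr_l; apply Rmult_le_compat_r; [lra|]; nra.
  - apply Rmult_le_compat_r; [lra|]; nra.
Qed.

Lemma kappa_Sq_lim : is_lim (fun y => kappa p (Sq y)) p_infty 1.
Proof.
  assert (Hcont : continuous (kappa p) 1).
  { apply (ex_derive_continuous (kappa p)); unfold kappa; auto_derive; exact I. }
  assert (Hk1 : kappa p 1 = 1) by (unfold kappa; ring).
  generalize (is_lim_comp_continuous Sq (kappa p) p_infty 1 Sq_lim Hcont); rewrite Hk1; trivial.
Qed.

Lemma Tq_lim : is_lim Tq p_infty (beta p).
Proof.
  apply (is_lim_ext_loc (fun y => (Hq y + beta p) / kappa p (Sq y))).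
  { generalize Sq_bounds_eventually; apply filter_imp; intros y [_ Hk].
    pose proof (kappa_min_pos p p_gt_1); unfold Hq; field; lra. }
  replace (Finite (beta p)) with (Rbar_div (0 + beta p) 1) by (simpl; f_equal; field).
  apply is_lim_div; [apply (is_lim_plus' Hq (fun _ => beta p)); [exact Hq_lim | apply is_lim_const]
    | exact kappa_Sq_lim | injection; lra | exact I].
Qed.

Lemma u_pow_over_y_lim : is_lim (fun y => Rpower (u y) (p - 1) / y) p_infty (/ p).
Proof.
  set (g := fun s => / 2 - gamma p * s / (beta p + 1)).
  pose proof (beta_pos p p_gt_1).
  apply (is_lim_ext_loc (fun y => g (Sq y) - Tq y / (y * y))).
  { exists Rb; intros y Hy; pose proof (u_pos y ltac:(lra)).
    assert (Hode := profile_ode y ltac:(lra)); rewrite (Rpower_pred (u y) p) in Hode by lra.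
    unfold g, Sq, Tq; rewrite Hode; field; repeat split; lra. }
  replace (/ p) with (g 1 - 0) by (unfold g, gamma, beta; field; lra).
  apply is_lim_minus'.
  - apply (is_lim_comp_continuous Sq g p_infty 1 Sq_lim).
    apply (ex_derive_continuous g); unfold g; auto_derive; lra.
  - replace (Finite 0) with (Rbar_div (beta p) p_infty) by (simpl; f_equal; ring).
    apply is_lim_div; [exact Tq_lim | | discriminate | exact I].
    apply (is_lim_mult (fun y => y) (fun y => y) p_infty p_infty p_infty); [apply is_lim_id .. | exact I].
Qed.

Lemma phi_over_pow_eq (y : R) : 0 < y ->
  phi y / Rpower y (beta p + 1) =
  Sq y / (beta p + 1) * Rpower (Rpower (u y) (p - 1) / y) (beta p).
Proof.
  intros Hy; pose proof (u_pos y Hy); pose proof (beta_pos p p_gt_1).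
  unfold Rpower; rewrite ln_div, ln_exp by (try apply exp_pos; lra).
  replace (beta p * ((p - 1) * ln (u y) - ln y)) with (ln (u y) - beta p * ln y)
    by (unfold beta; field; lra).
  replace ((beta p + 1) * ln y) with (ln y + beta p * ln y) by ring.
  unfold Rminus; rewrite !exp_plus, exp_Ropp, !exp_ln by lra.
  pose proof (exp_pos (beta p * ln y)); unfold Sq; field; repeat split; lra.
Qed.

Lemma phi_over_pow_lim :
  is_lim (fun y => phi y / Rpower y (beta p + 1)) p_infty (Rpower p (- beta p) / (beta p + 1)).
Proof.
  pose proof (beta_pos p p_gt_1).
  apply (is_lim_ext_loc (fun y => Sq y / (beta p + 1) * Rpower (Rpower (u y) (p - 1) / y) (beta p))).
  { exists 0; intros y Hy; symmetry; apply phi_over_pow_eq, Hy. }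
  replace (Rpower p (- beta p) / (beta p + 1))
    with (1 / (beta p + 1) * Rpower (/ p) (beta p)).
  2: { unfold Rpower; rewrite ln_Rinv by lra.
       replace (beta p * - ln p) with (- beta p * ln p) by ring; field; lra. }
  apply (is_lim_mult _ _ p_infty (1 / (beta p + 1)) (Rpower (/ p) (beta p))); [| | exact I].
  - replace (Finite (1 / (beta p + 1))) with (Rbar_div 1 (beta p + 1)) by reflexivity.
    apply is_lim_div; [exact Sq_lim | apply is_lim_const | injection; lra | exact I].
  - apply (is_lim_comp_continuous _ (fun q => Rpower q (beta p)) p_infty (/ p) u_pow_over_y_lim).
    apply (ex_derive_continuous (fun q => Rpower q (beta p))); unfold Rpower; auto_derive.
    apply Rinv_0_lt_compat; lra.
Qed.

End Profile.

Theorem proposition7p2 (p alpha Rb : R) (phi phi1 phi2 : R -> R) :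
  1 < p ->
  0 < alpha ->
  deriv_on_nonneg phi phi1 ->
  deriv_on_nonneg phi1 phi2 ->
  (forall y, 0 < y ->
     phi2 y = / 2 * y * phi1 y - ((p - 2) / (2 * (p - 1))) * phi y
              - rpow (Rabs (phi1 y)) p) ->
  phi 0 = 0 ->
  phi1 0 = alpha ->
  (forall y, 0 < y -> 0 < phi y) ->
  (forall y, 0 < y -> 0 < phi1 y) ->
  0 < Rb ->
  (forall y, 0 <= y < Rb -> phi2 y < 0) ->
  (forall y, Rb < y -> 0 < phi2 y) ->
  is_lim (fun y => phi y / Rpower y (/ (p - 1) + 1)) p_infty
    (Rpower p (- / (p - 1)) / (/ (p - 1) + 1)).
Proof.
  intros Hp _ [Hphi _] [Hphi1 _] Hode _ _ Hphi_pos Hphi1_pos HRb _ Hconvex.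
  assert (Hode' : forall y, 0 < y ->
    phi2 y = / 2 * y * phi1 y - gamma p * phi y - Rpower (phi1 y) p).
  { intros y Hy; rewrite (Hode y Hy); unfold rpow, gamma.
    rewrite Rabs_pos_eq by (apply Rlt_le, Hphi1_pos, Hy).
    destruct (Rle_dec (phi1 y) 0) as [Hle | _]; [pose proof (Hphi1_pos y Hy); lra | reflexivity]. }
  exact (phi_over_pow_lim p Rb phi phi1 phi2 Hp HRb Hphi Hphi1 Hode' Hphi_pos Hphi1_pos Hconvex).
Qed.
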